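(* Let $\mathbb F$ be any field, $n\ge k\ge 1$, and let $\mathcal K\subseteq M_{n\times k}(\mathbb F)$ be a linear variety such that $\det_{n,k}(X)=0$ for every $X\in\mathcal K$. Then $\operatorname{codim}(\mathcal K)\ge k$.
   Context: A linear variety in a finite-dimensional space $W$ is a nonempty set of the form $\mathbf s+V$ with $V\subseteq W$ a linear subspace (uniquely determined); $\operatorname{codim}\mathcal K=\dim W-\dim V$, here $W=M_{n\times k}(\mathbb F)$. Cullis' determinant: for $n\ge k$ and $X\in M_{n\times k}(\mathbb F)$, $\det_{n,k}(X)=\sum_{c}\operatorname{sgn}(c)\det\big(X[c|)\big)$, where $c$ ranges over the $k$-element subsets of $[n]$, $X[c|)$ is the $k\times k$ submatrix formed by the rows indexed by $c$ (in increasing order), and for $c=\{c(1)<\dots<c(k)\}$, $\operatorname{sgn}(c)=(-1)^{\sum_{\alpha=1}^k (c(\alpha)-\alpha)}$. *)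

From HB Require Import structures.
From mathcomp Require Import all_boot all_order all_algebra.
Set Implicit Arguments. Unset Strict Implicit. Unset Printing Implicit Defensive.
Import GRing.Theory.
Local Open Scope ring_scope.

(* For a k-subset c of 'I_n, enum c lists its elements in increasing order. *)

(* X[c|) : the k x k submatrix of X formed by the rows indexed by c, in
   increasing order (entry (a,j) = X (c(a)) j, c(a) the a-th smallest element). *)
Definition rowsel (F : fieldType) (n k : nat) (X : 'M[F]_(n, k))
    (c : {set 'I_n}) : 'M[F]_k :=
  \matrix_(a < k, j < k) nth 0 [seq X r j | r <- enum c] a.

(* sgn(c) = (-1)^(sum_alpha (c(alpha) - alpha)); the 0-based indices give the
   same differences as the 1-based ones of the paper. *)
Definition cullis_sgn (F : fieldType) (n k : nat) (c : {set 'I_n}) : F :=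
  (-1) ^+ (\sum_(a < k) (nth 0%N [seq val r | r <- enum c] a - a))%N.

Definition cullis_det (F : fieldType) (n k : nat) (X : 'M[F]_(n, k)) : F :=
  \sum_(c : {set 'I_n} | #|c| == k) @cullis_sgn F n k c * \det (rowsel X c).

From HB Require Import structures.
From mathcomp Require Import all_boot all_order all_algebra.
From mathcomp Require Import zify.
Import GRing.Theory.
Local Open Scope ring_scope.

(* Call f : 'M_(n, m+1) -> F a determinant form if f (X M) = f X * det M and f
   is additive in the first column; Cullis' determinant is a nonzero one.  A
   determinant form vanishing on an affine subspace S + V of codimension at most
   m vanishes identically, by induction on m.  Split V along the first column:
   Q is its image under X |-> X_0 and E = {Y | (0 | Y) \in V}, so that
   dim V = dim E + dim Q.  Freezing the first column to v gives a determinant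
   form on the other m columns; it vanishes on a translate of E, and even of
   E + <[v w]> for any row w, since adding multiples of the first column to the
   others does not change f.  If E has codimension at most m, the induction
   hypothesis kills every slice whose first column lies in S_0 + Q, and a form
   vanishing on all these slices is zero because Q has codimension at most m
   (an auxiliary induction).  Otherwise Q is everything and E has codimension
   exactly m + 1, so E + <[v w]> is small enough whenever v w \notin E, and
   such v span the column space. *)

Section DetForm.
Context {F : fieldType} {n : nat}.

(* Such an f is multilinear and alternating in the columns, i.e. a linear
   functional of their exterior product. *)
Record det_form {m} (f : 'M[F]_(n, m.+1) -> F) : Prop := DetForm {
  det_formM : forall X M, f (X *m M) = f X * \det M;
  det_formD : forall (a b : 'cV_n) (Y : 'M_(n, m)),
    f (row_mx (a + b) Y) = f (row_mx a Y) + f (row_mx b Y)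
}.

(* det_ublock and det_lblock restated at type 'M_m.+1 instead of 'M_(1 + m),
   so that they rewrite in goals about m.+1 columns. *)
Lemma det_ublockS m (A : 'M[F]_1) B (D : 'M_m) :
  \det (block_mx A B 0 D : 'M_m.+1) = \det A * \det D.
Proof. exact: (det_ublock A B D). Qed.

Lemma det_lblockS m (A : 'M[F]_1) C (D : 'M_m) :
  \det (block_mx A 0 C D : 'M_m.+1) = \det A * \det D.
Proof. exact: (det_lblock A C D). Qed.

Section Basic.
Context {m : nat} {f : 'M[F]_(n, m.+1) -> F} (Hf : det_form f).

Lemma det_formZ c (x : 'cV_n) (Y : 'M_(n, m)) :
  f (row_mx (c *: x) Y) = c * f (row_mx x Y).
Proof.
have -> : row_mx (c *: x) Y = row_mx x Y *m block_mx (c%:M : 'M_1) 0 0 1%:M.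
  by rewrite mul_row_block !mulmx0 addr0 add0r mulmx1 mul_mx_scalar.
by rewrite det_formM // det_ublockS det_scalar1 det1 mulr1 mulrC.
Qed.

Lemma det_form_shearr (x : 'cV_n) (Y : 'M_(n, m)) w :
  f (row_mx x (Y + x *m w)) = f (row_mx x Y).
Proof.
have -> : row_mx x (Y + x *m w) = row_mx x Y *m block_mx (1%:M : 'M_1) w 0 1%:M.
  by rewrite mul_row_block !mulmx0 addr0 !mulmx1 addrC.
by rewrite det_formM // det_ublockS !det1 !mulr1.
Qed.

Lemma det_form_shearl (x : 'cV_n) (Y : 'M_(n, m)) w :
  f (row_mx (x + Y *m w) Y) = f (row_mx x Y).
Proof.
have -> : row_mx (x + Y *m w) Y = row_mx x Y *m block_mx (1%:M : 'M_1) 0 w 1%:M.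
  by rewrite mul_row_block !mulmx0 add0r !mulmx1.
by rewrite det_formM // det_lblockS !det1 !mulr1.
Qed.

End Basic.

Section TwoColumns.
Context {m : nat} {f : 'M[F]_(n, m.+2) -> F} (Hf : det_form f).

Lemma det_form_swap (a b : 'cV_n) (Y : 'M_(n, m)) :
  f (row_mx a (row_mx b Y)) = - f (row_mx b (row_mx a Y)).
Proof.
pose e0 := row_mx (1%:M : 'M[F]_1) (0 : 'rV_m).
have shift (x y : 'cV_n) (Z : 'M_(n, m)) : row_mx x Z + y *m e0 = row_mx (x + y) Z.
  by rewrite /e0 mul_mx_row mulmx1 mulmx0 add_row_mx addr0.
pose w := col_mx (- 1%:M : 'M[F]_1) (0 : 'M_(m, 1)).
have Ew : a + row_mx (b + a) Y *m w = - b.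
  by rewrite /w mul_row_col mulmx0 addr0 mulmxN mulmx1 opprD addrCA subrr addr0.
rewrite -(det_form_shearr Hf a _ e0) shift -(det_form_shearl Hf _ _ w) Ew.
rewrite -scaleN1r det_formZ // mulN1r addrC -shift det_form_shearr //.
Qed.

Lemma det_form_slice (v : 'cV_n) : det_form (fun Y : 'M_(n, m.+1) => f (row_mx v Y)).
Proof.
split=> [Y M | a b Y]; last first.
  by rewrite !(det_form_swap v) -opprD det_formD.
have -> : row_mx v (Y *m M) = row_mx v Y *m block_mx (1%:M : 'M_1) 0 0 M.
  by rewrite mul_row_block !mulmx0 addr0 add0r mulmx1.
by rewrite det_formM // det_ublockS det1 mul1r.
Qed.
End TwoColumns.
End DetForm.
Arguments det_formM {F n m f}.
Arguments det_formD {F n m f}.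

Section VspaceDim.
Context {K : fieldType} {vT : vectType K}.

Lemma dimv_full_eq (U : {vspace vT}) :
  (dim vT <= \dim U)%N -> U = fullv.
Proof. by move=> hU; apply/eqP; rewrite eqEdim subvf dimvf. Qed.

Lemma dimv_add_line_gt {U : {vspace vT}} {v} :
  v \notin U -> (\dim U < \dim (U + <[v]>))%N.
Proof.
move=> vU; rewrite (ltn_leqif (dimv_leqif_sup (addvSl U _))).
by apply: contra vU => /subvP; apply; rewrite (subvP (addvSr U _)) ?memv_line.
Qed.

End VspaceDim.

Lemma exists_delta_mx_notin (K : fieldType) p q (E : {vspace 'M[K]_(p, q)}) :
  E != fullv -> exists i j, delta_mx i j \notin E.
Proof.
move=> EF; have : ~~ [forall i, forall j, delta_mx i j \in E].
  apply: contra EF => /forallP hE; rewrite eqEsubv subvf /=.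
  apply/subvP => A _; rewrite (matrix_sum_delta A).
  by apply: memv_suml => i _; apply: memv_suml => j _; apply/memvZ/(forallP (hE i)).
by case/forallPn => i /forallPn [j hij]; exists i, j.
Qed.

Section FirstColumn.
Context {F : fieldType} {n m : nat} (V : {vspace 'M[F]_(n, 1 + m)}).

Definition col0_proj : {vspace 'cV[F]_n} := (linfun lsubmx @: V)%VS.

Definition col0_ker : {vspace 'M[F]_(n, m)} :=
  (linfun rsubmx @: (V :&: lker (linfun lsubmx)))%VS.

Lemma col0_projP q : reflect (exists2 X, X \in V & lsubmx X = q) (q \in col0_proj).
Proof.
apply: (iffP memv_imgP) => [[X hX ->] | [X hX <-]]; exists X; rewrite ?lfunE //.
Qed.

Lemma mem_col0_ker Y : (Y \in col0_ker) = (row_mx 0 Y \in V).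
Proof.
apply/memv_imgP/idP => [[X] | hY].
  by rewrite memv_cap memv_ker !lfunE /= => /andP[hX /eqP X0] ->; rewrite -X0 hsubmxK.
exists (row_mx 0 Y); last by rewrite lfunE /= row_mxKr.
by rewrite memv_cap hY memv_ker lfunE /= row_mxKl.
Qed.

Lemma dim_col0 : (\dim col0_ker + \dim col0_proj)%N = \dim V.
Proof.
rewrite -(limg_ker_dim (linfun lsubmx) V); congr (_ + _)%N.
apply: limg_dim_eq; apply/eqP; rewrite -subv0; apply/subvP => X.
rewrite !memv_cap !memv_ker !lfunE /= => /andP[/andP[_ /eqP Xl] /eqP Xr].
by rewrite -(hsubmxK X) Xl Xr row_mx0 memv0.
Qed.

End FirstColumn.

Section Vanishing.
Context {F : fieldType} {n : nat}.

Lemma det_form_vanish_translate {m} {f : 'M[F]_(n, m.+1) -> F} {t} {Q : {vspace 'cV_n}} :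
    det_form f -> (forall q Y, q \in Q -> f (row_mx (t + q) Y) = 0) ->
  forall q Y, q \in Q -> f (row_mx q Y) = 0.
Proof.
move=> Hf ht q Y hq; have := det_formD Hf t q Y.
by rewrite ht // -[t]addr0 ht ?mem0v // add0r => <-.
Qed.

Lemma det_form_vanish_col0 {m} {f : 'M[F]_(n, m.+1) -> F} t (Q : {vspace 'cV_n}) :
    det_form f -> (n <= \dim Q + m)%N ->
    (forall q Y, q \in Q -> f (row_mx (t + q) Y) = 0) ->
  forall X, f X = 0.
Proof.
elim: m f t Q => [|m IH] f t Q Hf hQ /(det_form_vanish_translate Hf) HQ X.
all: rewrite -(hsubmxK (X : 'M_(n, 1 + _))); set u := lsubmx _.
all: have [/HQ-> // | uQ] := boolP (u \in Q).
  by move: uQ; rewrite (dimv_full_eq Q) ?memvf // /dim /= muln1 -[\dim Q]addn0.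
apply: (IH _ 0 (Q + <[u]>)%VS (det_form_slice Hf u)) => [|q' Y].
  by apply: leq_trans hQ _; rewrite addnS -addSn leq_add2r dimv_add_line_gt.
case/memv_addP=> q hq [_ /vlineP[c ->] ->].
have -> : 0 + (q + c *: u) = q + u *m c%:M by rewrite add0r mul_mx_scalar.
have -> : row_mx (q + u *m c%:M) Y = row_mx q Y + u *m row_mx c%:M 0.
  by rewrite mul_mx_row mulmx0 add_row_mx addr0.
by rewrite det_form_shearr // det_form_swap // HQ ?oppr0.
Qed.

Section InductionStep.
Context {m : nat}.
Hypothesis IH : forall (g : 'M[F]_(n, m.+1) -> F) S (V : {vspace 'M_(n, m.+1)}),
  det_form g -> (n * m.+1 < \dim V + m.+1)%N ->
  (forall X, X \in V -> g (S + X) = 0) -> forall X, g X = 0.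
Context {f : 'M[F]_(n, 1 + m.+1) -> F} (Hf : det_form f).
Context {S : 'M[F]_(n, 1 + m.+1)} {V : {vspace 'M[F]_(n, 1 + m.+1)}}.
Hypothesis HV : forall X, X \in V -> f (S + X) = 0.
Hypothesis hV : (n * m.+2 < \dim V + m.+2)%N.

Let E := col0_ker V.
Let Q := col0_proj V.

Lemma vanish_on_shifted_slice Xq e w : Xq \in V -> e \in E ->
  let v := lsubmx (S + Xq) in f (row_mx v (rsubmx (S + Xq) + (e + v *m w))) = 0.
Proof.
move=> hXq; rewrite mem_col0_ker => he v.
rewrite addrA det_form_shearr //.
have -> : row_mx v (rsubmx (S + Xq) + e) = S + (Xq + row_mx 0 e).
  by rewrite addrA -[in RHS](hsubmxK (S + Xq)) add_row_mx addr0.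
by rewrite HV // memvD.
Qed.

Lemma vanish_on_slice v w : v - lsubmx S \in Q ->
  (n * m.+1 < \dim (E + <[v *m w]>) + m.+1)%N -> forall Y, f (row_mx v Y) = 0.
Proof.
case/col0_projP => Xq hXq hl hdim.
have hv : lsubmx (S + Xq) = v by rewrite linearD /= hl addrC subrK.
apply: (IH _ (rsubmx (S + Xq)) _ (det_form_slice Hf v) hdim).
move=> _ /memv_addP[e he [_ /vlineP[c ->] ->]].
by rewrite scalemxAr -hv; apply: vanish_on_shifted_slice.
Qed.

Lemma col0_dim_cases :
  (n * m.+1 < \dim E + m.+1 /\ n <= \dim Q + m.+1)%N \/
  [/\ \dim E < n * m.+1, n * m.+1 <= \dim E + m.+1 & n <= \dim Q]%N.
Proof.
have dimE : (\dim E <= n * m.+1)%N.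
  by apply: leq_trans (dimvS (subvf E)) _; rewrite dimvf.
have dimQ : (\dim Q <= n)%N.
  by apply: leq_trans (dimvS (subvf Q)) _; rewrite dimvf /dim /= muln1.
(* The dimensions are generalized first: lia would otherwise see the same
   \dim at different (convertible) types as distinct atoms. *)
move: hV (dim_col0 V) dimE dimQ; rewrite mulnS.
move: (\dim V) (\dim E) (\dim Q) => dV dE dQ hV' dimEQ dimE dimQ.
by case: (ltnP (n * m.+1) (dE + m.+1)) => hE; [left | right]; split=> //; lia.
Qed.

Lemma vanish_step_ker_large :
  (n * m.+1 < \dim E + m.+1)%N -> (n <= \dim Q + m.+1)%N -> forall X, f X = 0.
Proof.
move=> hE hQ; apply: (det_form_vanish_col0 (lsubmx S) Q Hf hQ).
move=> q Y hq; apply: (vanish_on_slice _ 0); first by rewrite addrC addKr.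
by apply: leq_trans hE _; rewrite leq_add2r dimvS ?addvSl.
Qed.

Lemma vanish_step_ker_small : (\dim E < n * m.+1)%N ->
  (n * m.+1 <= \dim E + m.+1)%N -> (n <= \dim Q)%N -> forall X, f X = 0.
Proof.
move=> hE hE' hQ.
have QF : Q = fullv by apply: dimv_full_eq; rewrite /dim /= muln1.
have : E != fullv by apply: contraTneq hE => ->; rewrite dimvf ltnn.
case/exists_delta_mx_notin => i [j]; rewrite -(mul_delta_mx (0 : 'I_1)).
set z := delta_mx i 0; set w := delta_mx 0 j => zw.
have Hv v Y : v *m w \notin E -> f (row_mx v Y) = 0.
  move=> vw; apply: (vanish_on_slice _ w); first by rewrite QF memvf.
  by apply: leq_ltn_trans hE' _; rewrite ltn_add2r dimv_add_line_gt.
move=> X; rewrite -(hsubmxK (X : 'M_(n, 1 + m.+1))).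
set v := lsubmx _; set Y := rsubmx _.
have [vw | /Hv-> //] := boolP (v *m w \in E).
have vzw : (v + z) *m w \notin E.
  by apply: contra zw; rewrite mulmxDl => /memvB/(_ vw); rewrite addrC addKr.
by have := det_formD Hf v z Y; rewrite (Hv _ _ vzw) (Hv _ _ zw) addr0.
Qed.

Lemma vanish_step X : f X = 0.
Proof.
case: col0_dim_cases => [[hE hQ] | [hE hE' hQ]].
  exact: vanish_step_ker_large.
exact: vanish_step_ker_small.
Qed.
End InductionStep.

Theorem det_form_affine_vanish {m} {f : 'M[F]_(n, m.+1) -> F} {S}
    {V : {vspace 'M[F]_(n, m.+1)}} :
    det_form f -> (n * m.+1 < \dim V + m.+1)%N ->
    (forall X, X \in V -> f (S + X) = 0) ->
  forall X, f X = 0.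
Proof.
elim: m f S V => [|m IH] f S V Hf hV HV X; last exact: (vanish_step IH Hf HV hV).
have -> : X = S + (X - S) by rewrite addrC subrK.
by rewrite HV // (dimv_full_eq V) ?memvf //; move: hV; rewrite addn1 ltnS.
Qed.
End Vanishing.

Lemma det_add_col0 (F : fieldType) p (a b : 'cV[F]_p.+1) (Y : 'M_(p.+1, p)) :
  \det (row_mx (a + b) Y : 'M_p.+1) =
    \det (row_mx a Y : 'M_p.+1) + \det (row_mx b Y : 'M_p.+1).
Proof.
have col0 (x : 'cV_p.+1) : col' ord0 (row_mx x Y : 'M_p.+1) = Y.
  apply/matrixP => i l; rewrite mxE.
  have -> : lift ord0 l = rshift 1 l by apply: val_inj.
  exact: row_mxEr.
have ent0 (x : 'cV_p.+1) i : (row_mx x Y : 'M_p.+1) i ord0 = x i 0.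
  have -> : ord0 = lshift p (0 : 'I_1) by apply: val_inj.
  exact: row_mxEl.
rewrite !(expand_det_col _ ord0) -big_split; apply: eq_bigr => i _ /=.
by rewrite /cofactor !col0 !ent0 mxE mulrDl.
Qed.

Section Cullis.
Context {F : fieldType} {n : nat}.

Definition row_select k (c : {set 'I_n}) : 'M[F]_(k, n) :=
  \matrix_(a < k, r < n) (nth n [seq val i | i <- enum c] a == r)%:R.

Lemma rowselE k (X : 'M[F]_(n, k)) c : rowsel X c = row_select k c *m X.
Proof.
apply/matrixP => a j; rewrite !mxE.
have [ha | ha] := ltnP a (size (enum c)); last first.
  rewrite !nth_default ?size_map // big1 // => r _.
  by rewrite mxE nth_default ?size_map // gtn_eqF ?mul0r.
have x0 : 'I_n by case: (enum c) ha => [|x].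
rewrite (nth_map x0) // (bigD1 (nth x0 (enum c) a)) //= big1 ?addr0.
  by rewrite mxE (nth_map x0) // eqxx mul1r.
by move=> r /negbTE rx; rewrite mxE (nth_map x0) // eq_sym val_eqE rx mul0r.
Qed.

Lemma cullis_det_form k : det_form (@cullis_det F n k.+1).
Proof.
split=> [X M | a b Y].
  rewrite /cullis_det big_distrl; apply: eq_bigr => c _.
  by rewrite !rowselE mulmxA det_mulmx mulrA.
rewrite /cullis_det -big_split; apply: eq_bigr => c _ /=.
have sel (x : 'cV_n) : rowsel (row_mx x Y : 'M_(n, k.+1)) c =
    (row_mx (row_select k.+1 c *m x) (row_select k.+1 c *m Y) : 'M_k.+1).
  by rewrite rowselE (mul_mx_row (row_select k.+1 c) x Y).
by rewrite !sel mulmxDr det_add_col0 mulrDr.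
Qed.
End Cullis.

Section CullisWitness.
Context {F : fieldType} {n k : nat} (hkn : (k <= n)%N).

Definition top_id_mx : 'M[F]_(n, k) := \matrix_(i, j) (i == j :> nat)%:R.

Let c0 : {set 'I_n} := [set i : 'I_n | (i < k)%N].

Lemma val_enum_c0 : [seq val i | i <- enum c0] = iota 0 k.
Proof.
rewrite -(filter_iota_ltn 0 hkn) -val_enum_ord filter_map enumT /enum_mem.
by congr map; apply: eq_filter => i /=; rewrite inE.
Qed.

Lemma card_c0 : #|c0| = k.
Proof. by rewrite cardE -(size_map val) val_enum_c0 size_iota. Qed.

Lemma rowsel_top_id (c : {set 'I_n}) (a j : 'I_k) : #|c| = k ->
  rowsel top_id_mx c a j = (nth 0%N [seq val i | i <- enum c] a == j :> nat)%:R.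
Proof.
move=> ck; have ha : (a < size (enum c))%N by rewrite -cardE ck.
rewrite [LHS]mxE.
have -> : [seq top_id_mx r j | r <- enum c] =
    [seq (m == j :> nat)%:R | m <- [seq val i | i <- enum c]].
  by rewrite -map_comp; apply: eq_map => r; rewrite mxE.
by rewrite (nth_map 0%N) ?size_map.
Qed.

Lemma cullis_det_top_id : cullis_det top_id_mx = 1.
Proof.
rewrite /cullis_det (bigD1 c0) ?card_c0 //= big1 ?addr0 => [|c /andP[/eqP ck cc0]].
  have -> : rowsel top_id_mx c0 = 1%:M.
    by apply/matrixP => a j; rewrite rowsel_top_id ?card_c0 // val_enum_c0 nth_iota // mxE.
  rewrite det1 mulr1 /cullis_sgn val_enum_c0 big1 ?expr0 // => a _.
  by rewrite nth_iota // add0n subnn.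
have /subsetPn[r rc] : ~~ (c \subset c0).
  by rewrite eqEcard card_c0 ck leqnn andbT in cc0.
rewrite inE -leqNgt => kr.
have ha : (index r (enum c) < k)%N by rewrite -ck cardE index_mem mem_enum.
rewrite (expand_det_row _ (Ordinal ha)) big1 ?mulr0 // => j _.
rewrite rowsel_top_id //= (nth_map r) ?index_mem ?mem_enum // nth_index ?mem_enum //.
by rewrite gtn_eqF ?mul0r // (leq_trans (ltn_ord j)).
Qed.
End CullisWitness.

Theorem mainTheorem2 (F : fieldType) (n k : nat) (hk : (1 <= k)%N) (hkn : (k <= n)%N)
    (s : 'M[F]_(n, k)) (V : {vspace 'M[F]_(n, k)})
    (hK : forall X : 'M[F]_(n, k), X \in V -> cullis_det (s + X) = 0) :
  (k <= \dim (fullv : {vspace 'M[F]_(n, k)}) - \dim V)%N.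
Proof.
case: k hk hkn s V hK => [//|k] _ hkn s V hK.
rewrite leqNgt; apply/negP => hcodim.
have hV : (n * k.+1 < \dim V + k.+1)%N.
  by move: hcodim (dimvS (subvf V)); rewrite dimvf /dim /=; lia.
have := det_form_affine_vanish (cullis_det_form k) hV hK (top_id_mx : 'M[F]_(n, k.+1)).
by rewrite cullis_det_top_id //; apply/eqP/oner_neq0.
Qed.
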